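(* Let $n\ge 3$ be an integer. If $G$ is a graph on $2n$ vertices with at least $n^2-1$ edges such that $G$ does not contain two distinct vertices of the same degree joined by a path of length three, then $G$ is isomorphic to the complete bipartite graph $K_{n-1,n+1}$. (Equivalently, $K_{n-1,n+1}$ is the unique such graph.)
   Context: A path of length three joining vertices $a$ and $b$ is a path $a\,x\,y\,b$ with four distinct vertices and three edges $ax,xy,yb$. Graphs are finite and simple. *)

From mathcomp Require Import all_boot.
Set Implicit Arguments. Unset Strict Implicit. Unset Printing Implicit Defensive.

Definition simple_graph (T : finType) (e : rel T) : Prop :=
  symmetric e /\ irreflexive e.

Definition edges (T : finType) (e : rel T) : {set {set T}} :=
  [set E : {set T} | [exists x, exists y, (e x y) && (E == [set x; y])]].

Definition num_edges (T : finType) (e : rel T) : nat := #|edges e|.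

Definition degree (T : finType) (e : rel T) (x : T) : nat := #|[set y | e x y]|.

Definition path3 (T : finType) (e : rel T) (a b : T) : Prop :=
  exists x y : T,
    [/\ uniq [:: a; x; y; b], e a x, e x y & e y b].

Definition no_equal_degree_path3 (T : finType) (e : rel T) : Prop :=
  forall a b : T, a != b -> degree e a = degree e b -> ~ path3 e a b.

Definition Kbip (p q : nat) : rel ('I_p + 'I_q)%type :=
  fun u v => match u, v with
             | inl _, inr _ => true
             | inr _, inl _ => true
             | _, _ => false
             end.
Arguments Kbip : clear implicits.

Definition graph_iso (T T' : finType) (e : rel T) (e' : rel T') : Prop :=
  exists f : T -> T', bijective f /\ forall u v, e' (f u) (f v) = e u v.

From mathcomp Require Import all_boot zify.
Set Implicit Arguments. Unset Strict Implicit. Unset Printing Implicit Defensive.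

(* Let Δ be the maximum degree, u a vertex of degree Δ, D its neighbourhood and W the
   q = 2n - 1 - Δ vertices outside D and u. The edge bound reads Σ deg >= 2n^2 - 2
   and forces Δ >= n. The hypothesis is used through paths c - u - b - y: a vertex
   y ≠ u adjacent to some b ∈ D differs in degree from every c ∈ D other than b, y.
   - If some w ≠ u of degree Δ is not adjacent to u, no neighbour of w has a
     neighbour in D (path u - x - b - w). So at least as many vertices of W have
     no neighbour in D, hence degree below q, as there are vertices of D with a
     neighbour in D; if there are two of the latter, the degree sum drops below
     2n^2 - 2. Hence D is independent, and counting degrees leaves only
     Δ = n + 1 with D completely joined to W and u, which is K_{n-1,n+1}.
   - Otherwise the vertices of degree Δ form a clique, so there are at most three.
     If u has a neighbour a of degree Δ, the neighbours of a in D have pairwise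
     distinct degrees in a short interval, whence Δ <= n. If u is the only vertex
     of degree Δ, the degrees above q + 2 in D are pairwise distinct (such vertices
     have two neighbours in D) and at most two equal q + 2. Either way the degree
     sum falls below 2n^2 - 2. *)

Section Counting.
Variable I : finType.

Lemma card_sum1 (A : {pred I}) : #|A| = \sum_i (i \in A : nat).
Proof. by rewrite -sum1_card big_mkcond. Qed.

Lemma sum_nat_count (A : {pred I}) (P : pred I) :
  \sum_(i in A) (P i : nat) = #|[set i in A | P i]|.
Proof.
by rewrite card_sum1 big_mkcond; apply: eq_bigr => i _; rewrite inE; case: (i \in A).
Qed.

Lemma exists_notin (A : {set I}) (s : seq I) :
  size s < #|A| -> exists2 x, x \in A & x \notin s.
Proof.
move=> ltsA; have : 0 < #|A :\: [set x in s]|.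
  rewrite cardsD subn_gt0 (leq_ltn_trans _ ltsA) //.
  by rewrite (leq_trans (subset_leq_card (subsetIr _ _))) // cardsE card_size.
by case/card_gt0P => x; rewrite !inE => /andP[xNs xA]; exists x.
Qed.

Lemma uniq_image_in (A : {pred I}) (T' : eqType) (f : I -> T') :
  {in A &, injective f} -> uniq [seq f i | i in A].
Proof.
move=> injf; rewrite map_inj_in_uniq ?enum_uniq // => x y.
by rewrite !mem_enum; apply: injf.
Qed.

Lemma card_le_injective_range (A : {set I}) (f : I -> nat) lo hi :
  {in A &, injective f} -> (forall i, i \in A -> lo <= f i <= hi) ->
  #|A| <= hi.+1 - lo.
Proof.
move=> injf frange; rewrite -(size_iota lo (hi.+1 - lo)) cardE -(size_map f).
apply: uniq_leq_size (uniq_image_in injf) _ => _ /mapP[i iA ->].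
by rewrite -/(index_iota lo hi.+1) mem_index_iota ltnS; apply: frange; rewrite -mem_enum.
Qed.

Lemma double_sum_from2 K : 2 * \sum_(2 <= i < K.+1) i = K * K.+1 - 2.
Proof.
elim: K => [|[|K] IH]; try by rewrite big_geq.
by rewrite big_nat_recr //= mulnDr IH; nia.
Qed.

Lemma sum_le_injective_range (A : {set I}) (f : I -> nat) K :
  {in A &, injective f} -> (forall i, i \in A -> 2 <= f i <= K) ->
  2 * \sum_(i in A) f i <= K * K.+1 - 2.
Proof.
move=> injf frange; rewrite -double_sum_from2 leq_mul2l /= -(big_image _ _ f (mem A) id).
apply: (uniq_sub_le_big leqnn (fun x y => leq_addr y x)); first exact: uniq_image_in.
- exact: iota_uniq.
- by move=> _ /mapP[i iA ->]; rewrite mem_index_iota ltnS; apply: frange; rewrite -mem_enum.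
Qed.

End Counting.

Definition nbhd (T : finType) (e : rel T) (x : T) : {set T} := [set y | e x y].

Definition non_nbhd (T : finType) (e : rel T) (u : T) : {set T} :=
  [set x | (x != u) && ~~ e u x].

Definition maxdeg (T : finType) (e : rel T) : nat := \max_x degree e x.

Section SimpleGraph.
Variables (T : finType) (e : rel T).
Hypotheses (e_sym : symmetric e) (e_irr : irreflexive e).
Local Notation d := (degree e).

Lemma adj_neq x y : e x y -> x != y.
Proof. by apply: contraTneq => ->; rewrite e_irr. Qed.

Lemma card_nbhd x : #|nbhd e x| = d x.
Proof. by []. Qed.

Lemma nbhd_neq u a : a \in nbhd e u -> a != u.
Proof. by rewrite inE eq_sym => /adj_neq. Qed.

Lemma degree_edges x : d x = #|[set E in edges e | x \in E]|.
Proof.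
rewrite /degree -(@card_in_imset _ _ (fun y => [set x; y])); last first.
  move=> y y'; rewrite !inE => xy xy' /setP/(_ y); rewrite !inE eqxx orbT.
  by case/esym/orP=> /eqP // yx; rewrite yx e_irr in xy.
apply: eq_card => E; rewrite [RHS]inE; apply/imsetP/andP => [[y xy ->]|[]].
  rewrite inE in xy; split; last by rewrite !inE eqxx.
  by rewrite inE; apply/existsP; exists x; apply/existsP; exists y; rewrite xy eqxx.
rewrite inE => /existsP[a /existsP[b /andP[ab /eqP->]]]; rewrite !inE.
by case/orP=> /eqP->; [exists b | exists a; rewrite 1?setUC]; rewrite // inE // e_sym.
Qed.

Lemma sum_degree : \sum_x d x = 2 * num_edges e.
Proof.
transitivity (\sum_x \sum_(E in edges e) (x \in E : nat)).
  apply: eq_bigr => x _; rewrite degree_edges card_sum1 [RHS]big_mkcond.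
  by apply: eq_bigr => E _; rewrite inE; case: (E \in edges e).
rewrite exchange_big /= mulnC -sum_nat_const; apply: eq_bigr => E.
rewrite inE => /existsP[x /existsP[y /andP[xy /eqP->]]].
by rewrite -card_sum1 cards2 (adj_neq xy).
Qed.

Lemma sum_vertices_split (F : T -> nat) u :
  \sum_x F x = F u + \sum_(a in nbhd e u) F a + \sum_(w in non_nbhd e u) F w.
Proof.
rewrite (bigD1 u) //= -addnA (bigID (e u)) /=; congr (_ + (_ + _)).
  apply: eq_bigl => x; rewrite inE andbC.
  by case: (boolP (e u x)) => //= ux; rewrite eq_sym adj_neq.
by apply: eq_bigl => x; rewrite inE.
Qed.

Lemma card_vertices_split u : #|T| = (d u).+1 + #|non_nbhd e u|.
Proof. by rewrite -!sum1_card (sum_vertices_split _ u) sum1_card. Qed.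

Lemma degree_nbhd_split u a : a \in nbhd e u ->
  d a = (#|nbhd e a :&: nbhd e u| + #|nbhd e a :&: non_nbhd e u|).+1.
Proof.
rewrite inE => ua; rewrite -card_nbhd -(cardsID (nbhd e u) (nbhd e a)) -addnS.
congr (_ + _); rewrite (cardsD1 u (_ :\: _)) !inE e_sym ua e_irr /=; congr (_.+1).
by apply: eq_card => x; rewrite !inE; case: (e a x); rewrite ?andbT ?andbF.
Qed.

Lemma degree_non_nbhd_split u w : w \in non_nbhd e u ->
  d w = #|nbhd e w :&: nbhd e u| + #|nbhd e w :&: non_nbhd e u|.
Proof.
rewrite inE => /andP[wu uNw]; rewrite -card_nbhd -(cardsID (nbhd e u)); congr (_ + _).
apply: eq_card => x; rewrite !inE andbC.
by case: (x =P u) => [->|] //=; rewrite e_sym (negbTE uNw).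
Qed.

Lemma degree_nbhd_le u a : a \in nbhd e u ->
  d a <= #|non_nbhd e u|.+1 + #|nbhd e a :&: nbhd e u|.
Proof.
move=> ua; have := degree_nbhd_split ua.
have : #|nbhd e a :&: non_nbhd e u| <= #|non_nbhd e u| by rewrite subset_leq_card ?subsetIr.
lia.
Qed.

Lemma card_nbhd_non_nbhd_lt u w : w \in non_nbhd e u ->
  #|nbhd e w :&: non_nbhd e u| < #|non_nbhd e u|.
Proof.
move=> wW; rewrite (cardsD1 w (non_nbhd e u)) wW ltnS subset_leq_card //.
by apply/subsetP => x; rewrite !inE => /andP[wx ->]; rewrite eq_sym (adj_neq wx).
Qed.

Lemma leq_degree_maxdeg x : d x <= maxdeg e.
Proof. exact: leq_bigmax. Qed.

Lemma maxdeg_attained : 0 < #|T| -> exists u, d u = maxdeg e.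
Proof. by rewrite /maxdeg => /(eq_bigmax d)[u ->]; exists u. Qed.

Lemma sum_degree_le_maxdeg :
  \sum_x d x <= #|T| * (maxdeg e).-1 + #|[set x | d x == maxdeg e]|.
Proof.
rewrite card_sum1 -sum_nat_const -big_split /=; apply: leq_sum => x _.
by rewrite inE; have := leq_degree_maxdeg x; case: eqP => /=; lia.
Qed.

End SimpleGraph.

Lemma complete_bipartite_iso (T : finType) (e : rel T) (B : {set T}) p q :
  #|~: B| = p -> #|B| = q -> (forall x y, e x y = ((x \in B) != (y \in B))) ->
  graph_iso e (Kbip p q).
Proof.
move=> cardBC cardB eB.
pose g (i : 'I_p + 'I_q) := match i with
  | inl i => enum_val (cast_ord (esym cardBC) i)
  | inr j => enum_val (cast_ord (esym cardB) j) end.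
have gB i : (g i \in B) = if i is inr _ then true else false.
  case: i => i /=; last exact: enum_valP.
  by move: (enum_valP (cast_ord (esym cardBC) i)); rewrite inE => /negbTE.
have g_inj : injective g.
  move=> i j gij; have := gB i; rewrite gij gB.
  by case: i j gij => [i|i] [j|j] //= /enum_val_inj/cast_ord_inj ->.
have [f gK fK] : bijective g.
  have cardT : #|T| <= #|{: 'I_p + 'I_q}|.
    by rewrite card_sum !card_ord -cardBC -cardB addnC cardsC.
  exact: inj_card_bij g_inj cardT.
exists f; split; first by exists g.
by move=> x y; rewrite -{2}(fK x) -{2}(fK y) eB !gB; case: (f x); case: (f y).
Qed.

Lemma leq_sub2_neq_pred m k : m < k -> m != k.-1 -> m <= k - 2.
Proof. lia. Qed.

Lemma leq_mul_AGM n a b : a + b = 2 * n -> a * b <= n * n.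
Proof. by move=> abn; have [le_an|le_na] := leqP a n; nia. Qed.

(* The degree counts behind [unique_max_absurd]: m = Δ, q = |W|, and SD, SW are the
   degree sums over the neighbourhood of u and over W. *)
Lemma unique_max_arith1 n m q SD SW : 3 <= n -> m.+1 + q = 2 * n -> n < m ->
  2 * SD <= 2 * (m * q.+1) + (m - 2 - q.+1) * (m - 2 - q.+1).+1 + 2 * (q.+1 < m - 2) ->
  SW <= q * (m - 1) -> 2 * (n * n) <= m + SD + SW + 2 -> False.
Proof.
move=> n_ge3 mq m_gt SD_le SW_le sum_ge.
case: (ltnP q.+1 (m - 2)) SD_le => /= [qL|Lq] SD_le; nia.
Qed.

Lemma unique_max_arith2 n m q SD SW : 4 <= n -> 0 < q -> m.+1 + q = 2 * n -> n < m ->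
  2 * SD <= 2 * (m * q.+1) + (m - 1 - q.+1) * (m - 1 - q.+1).+1 + 2 * (q.+1 < m - 1) ->
  SW <= q * (m - 2) -> 2 * (n * n) <= m + SD + SW + 2 -> False.
Proof.
move=> n_ge4 q_gt0 mq m_gt SD_le SW_le sum_ge.
case: (ltnP q.+1 (m - 1)) SD_le => /= [qL|Lq] SD_le; nia.
Qed.

Section NoEqualDegreePath3.
Variables (T : finType) (e : rel T).
Hypotheses (e_sym : symmetric e) (e_irr : irreflexive e).
Hypothesis no_path3 : no_equal_degree_path3 e.
Local Notation d := (degree e).

Lemma path3_degree_neq a x y b : e a x -> e x y -> e y b ->
  a != y -> x != b -> a != b -> d a <> d b.
Proof.
move=> ax xy yb ay xb ab dab; apply: (no_path3 ab dab); exists x, y; split => //=.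
by rewrite !inE !negb_or (adj_neq e_irr ax) (adj_neq e_irr xy) (adj_neq e_irr yb) ay ab xb.
Qed.

Lemma common_nbr_degree_neq u c b y : c \in nbhd e u -> b \in nbhd e u ->
  e b y -> y != u -> y != c -> b != c -> d c != d y.
Proof.
rewrite !inE => uc ub eby yu yc bc; apply/eqP.
by apply: (path3_degree_neq (x := u) (y := b)); rewrite // 1?e_sym // eq_sym.
Qed.

Lemma common_nbhd_degree_injective u a : e u a ->
  {in nbhd e a :&: nbhd e u &, injective d}.
Proof.
move=> ua b b'; rewrite !inE => /andP[ab ub] /andP[ab' ub'] dbb'.
apply/eqP/negPn/negP => bb'.
apply: (path3_degree_neq (x := a) (y := u) _ _ ub' _ _ bb' dbb'); rewrite 1?e_sym //.
  by rewrite eq_sym (adj_neq e_irr ub).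
exact: (adj_neq e_irr ab').
Qed.

Section NbhdDegrees.
Variable u : T.
Local Notation D := (nbhd e u).
Local Notation W := (non_nbhd e u).
Local Notation q := (#|W|).

Lemma high_degree_nbhd_unique a c : a \in D -> q + 3 <= d a ->
  c \in D -> c != a -> d c != d a.
Proof.
move=> aD da_ge cD ca.
have [b] : exists2 b, b \in nbhd e a :&: D & b \notin [:: c].
  by apply: exists_notin => /=; have := degree_nbhd_le e_sym e_irr aD; lia.
rewrite !inE => /andP[ab ub] bc; have bD : b \in D by rewrite inE.
have ba : e b a by rewrite e_sym.
by rewrite (common_nbr_degree_neq cD bD ba (nbhd_neq e_irr aD)) // eq_sym.
Qed.

Lemma card_mid_degree_nbhd_le2 : #|[set a in D | d a == q + 2]| <= 2.
Proof.
set H := [set a in D | d a == q + 2]; rewrite leqNgt; apply/negP => H_gt2.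
have [a aH _] : exists2 a, a \in H & a \notin [::].
  by apply: exists_notin; apply: leq_ltn_trans H_gt2.
move: (aH); rewrite inE => /andP[aD /eqP da].
have [b] : exists b, b \in nbhd e a :&: D.
  by apply/card_gt0P; have := degree_nbhd_le e_sym e_irr aD; rewrite da; lia.
rewrite !inE => /andP[ab ub]; have bD : b \in D by rewrite inE.
have [x xH] : exists2 x, x \in H & x \notin [:: a; b] by apply: exists_notin.
rewrite !inE => /norP[xa xb]; move: xH; rewrite inE => /andP[xD /eqP dx].
have ba : e b a by rewrite e_sym.
have ax : a != x by rewrite eq_sym.
have bx : b != x by rewrite eq_sym.
by have := common_nbr_degree_neq xD bD ba (nbhd_neq e_irr aD) ax bx; rewrite dx da eqxx.
Qed.

Lemma sum_excess_nbhd_le :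
  \sum_(a in D) (d a - q.+1) <=
  \sum_(a in [set a in D | q + 2 < d a]) (d a - q.+1) + #|[set a in D | d a == q + 2]|.
Proof.
set H := [set a in D | q + 2 < d a].
have sHD : H \subset D by apply/subsetP => a; rewrite inE => /andP[].
rewrite (big_setID H) (setIidPr sHD) /= leq_add2l (card_sum1 [set a in D | d a == q + 2]).
rewrite big_mkcond /=.
apply: leq_sum => a _; rewrite !inE; case: (e u a) => //=.
by rewrite -leqNgt andbT; case: eqP => //= da; case: ifP; lia.
Qed.

(* The excess d a - q.+1 of a ∈ D is at most its number of neighbours in D; the
   excesses above 1 are distinct values in [2, L - q.+1], and at most two equal 1. *)
Lemma sum_degree_nbhd_le L : {in D, forall a, d a <= L} ->
  2 * \sum_(a in D) d a <= 2 * (d u * q.+1) + (L - q.+1) * (L - q.+1).+1 + 2 * (q.+1 < L).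
Proof.
move=> d_le; set K := L - q.+1.
have sum_split : \sum_(a in D) d a <= d u * q.+1 + \sum_(a in D) (d a - q.+1).
  rewrite -card_nbhd -sum_nat_const -big_split /=.
  by apply: leq_sum => a _; rewrite -leq_subLR.
case: (ltnP q.+1 L) => [qL | Lq] /=; last first.
  suff : \sum_(a in D) (d a - q.+1) = 0 by lia.
  by apply: big1 => a aD; apply/eqP; rewrite subn_eq0 (leq_trans (d_le a aD)).
have inj : {in [set a in D | q + 2 < d a] &, injective (fun a => d a - q.+1)}.
  move=> a b; rewrite !inE => /andP[ua da] /andP[ub db] dab.
  apply/eqP/negPn/negP => ab.
  have := @high_degree_nbhd_unique a b; rewrite !inE ua ub eq_sym ab; lia.
have range a : a \in [set a in D | q + 2 < d a] -> 2 <= d a - q.+1 <= K.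
  by rewrite !inE => /andP[ua da]; have := d_le a; rewrite inE ua => /(_ isT); lia.
have := sum_le_injective_range inj range.
have := sum_excess_nbhd_le; have := card_mid_degree_nbhd_le2.
nia.
Qed.

End NbhdDegrees.

Section Extremal.
Variable n : nat.
Hypotheses (n_ge3 : 3 <= n) (card_T : #|T| = 2 * n).
Hypothesis sum_degree_ge : 2 * (n * n) <= \sum_x d x + 2.
Local Notation Δ := (maxdeg e).

Lemma maxdeg_ge : n <= Δ.
Proof.
have sum_le : \sum_x d x <= 2 * n * Δ.
  by rewrite -card_T -sum_nat_const; apply: leq_sum => x _; apply: leq_degree_maxdeg.
rewrite leqNgt; apply/negP => ltΔn.
have : 2 * n * Δ <= 2 * n * n.-1 by apply: leq_mul => //; lia.
nia.
Qed.

Lemma maxdeg_split u : d u = Δ -> Δ.+1 + #|non_nbhd e u| = 2 * n.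
Proof. by move=> du; rewrite -card_T (card_vertices_split e_irr u) du. Qed.

Section NonadjacentMaxPair.
Variables u w : T.
Hypotheses (du : d u = Δ) (dw : d w = Δ) (wu : w != u) (uNw : ~~ e u w).
Local Notation D := (nbhd e u).
Local Notation W := (non_nbhd e u).
Local Notation q := (#|W|).
Local Notation D1 := ([set a in D | [exists b in D, e a b]]).
Local Notation D0 := (D :\: D1).
Local Notation W0 := ([set x in W | [forall b in D, ~~ e x b]]).

Lemma nonadj_max_nbhd_sub : nbhd e w \subset D0 :|: W0.
Proof.
apply/subsetP => b; rewrite inE => wb.
have bu : b != u by apply: contraNneq uNw => <-; rewrite e_sym.
have bND x : x \in D -> ~~ e b x.
  rewrite inE => ux; apply/negP => bx.
  have xw : x != w by apply: contraNneq uNw => <-.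
  by apply: (path3_degree_neq (y := b) (b := w) ux); rewrite ?du ?dw // 1?e_sym // eq_sym.
have noD : ~~ [exists x in D, e b x] by apply/exists_inP => -[x /bND/negP].
have allD : [forall x in D, ~~ e b x] by apply/forall_inP.
by rewrite !inE bu (negbTE noD) allD /= andbF andbT; case: (e u b).
Qed.

Lemma nonadj_max_sum_nbhd_le : \sum_(a in D) d a <= #|D1| * Δ + #|D0| * q.+1.
Proof.
have sD1 : D1 \subset D by apply/subsetP => a; rewrite inE => /andP[].
rewrite (big_setID D1) (setIidPr sD1) /= -!sum_nat_const.
apply: leq_add; apply: leq_sum => a; first by rewrite leq_degree_maxdeg.
rewrite !inE => /andP[noD ua].
rewrite (degree_nbhd_split e_sym e_irr (_ : a \in D)) ?inE //.
rewrite ltnS -[X in _ <= X]add0n leq_add // ?subset_leq_card ?subsetIr // leqn0 cards_eq0.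
apply/eqP/setP => b; rewrite !inE; apply/andP => -[ab ub].
by move: noD; rewrite ua /=; apply/negP/negPn/exists_inP; exists b; rewrite ?inE.
Qed.

Lemma nonadj_max_sum_non_nbhd_le :
  \sum_(x in W) d x + #|W0| <= #|W :\: W0| * Δ + #|W0| * q.
Proof.
have sW0 : W0 \subset W by apply/subsetP => x; rewrite inE => /andP[].
rewrite (big_setID W0) (setIidPr sW0) /= -!sum_nat_const -sum1_card addnAC -big_split /=.
rewrite addnC; apply: leq_add; apply: leq_sum => x; first by rewrite leq_degree_maxdeg.
rewrite inE => /andP[xW /forall_inP noD]; rewrite addn1 (degree_non_nbhd_split e_sym xW).
have -> : #|nbhd e x :&: D| = 0.
  apply/eqP; rewrite cards_eq0; apply/eqP/setP => b; rewrite !inE.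
  by apply/andP => -[xb ub]; have := noD b; rewrite inE ub xb => /(_ isT).
by rewrite add0n card_nbhd_non_nbhd_lt.
Qed.

Lemma nonadj_max_arith t d0 r w0 SD SW :
  t + d0 = Δ -> r + w0 = q -> t <= w0 -> q <= Δ ->
  SD <= t * Δ + d0 * q.+1 -> SW + w0 <= r * Δ + w0 * q ->
  Δ + SD + SW + 2 * t <= 2 * (Δ * q.+1).
Proof.
move=> tΔ rq tw0 qΔ SDle SWle.
have : t * (Δ - q) <= w0 * (Δ - q) by rewrite leq_mul2r tw0 orbT.
nia.
Qed.

Lemma nonadj_max_nbhd_indep : {in D &, forall a b, ~~ e a b}.
Proof.
move=> a b aD bD; apply/negP => ab.
have sD1 : D1 \subset D by apply/subsetP => x; rewrite inE => /andP[].
have sW0 : W0 \subset W by apply/subsetP => x; rewrite inE => /andP[].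
have D1_ge2 : 2 <= #|D1|.
  have aD1 : a \in D1 by rewrite inE aD; apply/exists_inP; exists b.
  have bD1 : b \in D1 by rewrite inE bD; apply/exists_inP; exists a; rewrite // e_sym.
  rewrite (cardsD1 a) aD1 ltnS card_gt0; apply/set0Pn; exists b.
  by rewrite in_setD1 bD1 andbT eq_sym (adj_neq e_irr ab).
have cardD : #|D1| + #|D0| = Δ by rewrite -du -card_nbhd -(cardsID D1 D) (setIidPr sD1).
have cardW : #|W :\: W0| + #|W0| = q by rewrite -(cardsID W0 W) (setIidPr sW0) addnC.
have D1_le : #|D1| <= #|W0|.
  have := subset_leq_card nonadj_max_nbhd_sub; rewrite card_nbhd dw.
  by have := (leq_card_setU D0 W0).1; lia.
have split_u : Δ.+1 + q = 2 * n := maxdeg_split du.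
have Δ_ge := maxdeg_ge.
have qΔ : q <= Δ by lia.
have := nonadj_max_arith cardD cardW D1_le qΔ
  nonadj_max_sum_nbhd_le nonadj_max_sum_non_nbhd_le.
have : Δ * q.+1 <= n * n by apply: leq_mul_AGM; lia.
have : \sum_x d x = Δ + \sum_(a in D) d a + \sum_(x in W) d x.
  by rewrite (sum_vertices_split e_irr d u) du.
lia.
Qed.

End NonadjacentMaxPair.

Section IndependentMaxNbhd.
Variable u : T.
Hypotheses (du : d u = Δ) (indep : {in nbhd e u &, forall a b, ~~ e a b}).
Local Notation D := (nbhd e u).
Local Notation W := (non_nbhd e u).
Local Notation q := (#|W|).

Lemma degree_indep_nbhd a : a \in D -> d a = (#|nbhd e a :&: W|).+1.
Proof.
move=> aD; rewrite (degree_nbhd_split e_sym e_irr aD) -[in RHS](add0n #|_|).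
congr (_ + _).+1.
apply/eqP; rewrite cards_eq0; apply/eqP/setP => b; rewrite !inE.
apply/andP => -[ab ub]; have bD : b \in D by rewrite inE.
by move: (indep aD bD); rewrite ab.
Qed.

Lemma indep_max_deficit :
  2 * ((Δ - n) * (Δ - n)) + \sum_(a in D) (q - #|nbhd e a :&: W|)
    + \sum_(x in W) (Δ - d x) <= 2.
Proof.
have sumD : \sum_(a in D) d a + \sum_(a in D) (q - #|nbhd e a :&: W|) = Δ * q.+1.
  rewrite -big_split -du -card_nbhd -sum_nat_const; apply: eq_bigr => a aD /=.
  by rewrite degree_indep_nbhd // addSn subnKC // subset_leq_card ?subsetIr.
have sumW : \sum_(x in W) d x + \sum_(x in W) (Δ - d x) = q * Δ.
  rewrite -big_split -sum_nat_const; apply: eq_bigr => x _ /=.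
  by rewrite subnKC // leq_degree_maxdeg.
have split_u : Δ.+1 + q = 2 * n := maxdeg_split du.
have : Δ * q.+1 + (Δ - n) * (Δ - n) = n * n by have := maxdeg_ge; nia.
have : \sum_x d x = Δ + \sum_(a in D) d a + \sum_(x in W) d x.
  by rewrite (sum_vertices_split e_irr d u) du.
lia.
Qed.

Lemma indep_max_maxdeg_neq : Δ != n.
Proof.
apply/eqP => Δn; have := indep_max_deficit; rewrite Δn subnn muln0 add0n.
set X := \sum_(a in D) _ => XY_le2.
have cW_le a : #|nbhd e a :&: W| <= q by rewrite subset_leq_card ?subsetIr.
have split_u : Δ.+1 + q = 2 * n := maxdeg_split du.
have [a' a'D a'W] : exists2 a', a' \in D & #|nbhd e a' :&: W| = q.
  case: (boolP [exists a in D, #|nbhd e a :&: W| == q]) => [/exists_inP[a' ? /eqP]|].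
    by exists a'.
  move/exists_inPn => cW_neq; have : #|D| * 1 <= X.
    rewrite -sum_nat_const; apply: leq_sum => a aD.
    by have := cW_neq a aD; have := cW_le a; lia.
  by rewrite card_nbhd du; lia.
have [a aD aW] : exists2 a, a \in D :\ a' & 0 < #|nbhd e a :&: W|.
  case: (boolP [exists a in D :\ a', 0 < #|nbhd e a :&: W|]) => [/exists_inP[a ? ?]|].
    by exists a.
  move/exists_inPn => cW0; have : #|D :\ a'| * q <= X.
    rewrite /X (big_setD1 a') //= -sum_nat_const (leq_trans _ (leq_addl _ _)) //.
    by apply: leq_sum => b bD; have := cW0 b bD; lia.
  by have := cardsD1 a' D; rewrite a'D card_nbhd du; nia.
have [x] := card_gt0P aW; rewrite !inE => /andP[ax /andP[xu uNx]].
have a'x : e a' x.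
  have /eqP WW : nbhd e a' :&: W == W by rewrite eqEcard subsetIr a'W leqnn.
  have : x \in W by rewrite inE xu uNx.
  by rewrite -WW !inE e_sym => /andP[].
move: aD; rewrite !inE => /andP[aa' ua].
apply: (path3_degree_neq (x := a) (y := x) (b := a') ua ax); rewrite 1?e_sym //.
- by rewrite eq_sym.
- by rewrite (adj_neq e_irr) // -inE.
- by rewrite du (degree_indep_nbhd a'D) a'W; lia.
Qed.

Lemma indep_max_maxdeg : Δ = n.+1.
Proof.
have := indep_max_deficit; have := maxdeg_ge; have := indep_max_maxdeg_neq; nia.
Qed.

Lemma indep_max_complete_regular :
  {in D & W, forall a x, e a x} /\ {in W, forall x, d x = Δ}.
Proof.
have := indep_max_deficit; rewrite indep_max_maxdeg subSnn muln1.
set X := \sum_(a in D) _; set Y := \sum_(x in W) _ => deficit.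
have : X == 0 by lia.
have : Y == 0 by lia.
rewrite !sum_nat_eq0 => /forall_inP Y0 /forall_inP X0; split => [a x aD xW | x xW].
  have /eqP WW : nbhd e a :&: W == W.
    by rewrite eqEcard subsetIr -subn_eq0 X0.
  by move: xW; rewrite -WW !inE => /andP[].
by apply/eqP; rewrite eqn_leq andbC -subn_eq0 Y0 // -indep_max_maxdeg leq_degree_maxdeg.
Qed.

Lemma indep_max_non_nbhd_indep : {in W &, forall x y, ~~ e x y}.
Proof.
have [complete regular] := indep_max_complete_regular.
move=> x y xW yW; have := degree_non_nbhd_split e_sym xW; rewrite regular //.
have -> : nbhd e x :&: D = D.
  by apply/setIidPr/subsetP => a aD; rewrite inE e_sym complete.
rewrite card_nbhd du -[X in X = _]addn0 => /addnI/esym/eqP.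
by rewrite cards_eq0 => /eqP/setP/(_ y); rewrite in_setI in_set0 yW andbT inE => ->.
Qed.

Lemma indep_max_bipartite x y : e x y = ((x \in D) != (y \in D)).
Proof.
have [complete _] := indep_max_complete_regular.
have inW z : z != u -> z \notin D -> z \in W by rewrite !inE => -> ->.
case xD: (x \in D); case yD: (y \in D) => /=.
- exact/negbTE/indep.
- have [->|yu] := eqVneq y u; first by rewrite e_sym -xD inE.
  by rewrite complete ?inW ?yD.
- have [->|xu] := eqVneq x u; first by rewrite -yD inE.
  by rewrite e_sym complete ?inW ?xD.
- have [->|xu] := eqVneq x u; first by rewrite -yD inE.
  have [->|yu] := eqVneq y u; first by rewrite e_sym -xD inE.
  by apply/negbTE/indep_max_non_nbhd_indep; rewrite inW ?xD ?yD.
Qed.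

Lemma indep_max_iso : graph_iso e (Kbip n.-1 n.+1).
Proof.
have cardD : #|D| = n.+1 by rewrite card_nbhd du indep_max_maxdeg.
apply: (complete_bipartite_iso _ cardD indep_max_bipartite).
by have := cardsC D; rewrite cardD card_T; lia.
Qed.

End IndependentMaxNbhd.

Section AdjacentMaxPair.
Variables u a : T.
Hypotheses (du : d u = Δ) (da : d a = Δ) (ua : e u a).
Local Notation D := (nbhd e u).
Local Notation W := (non_nbhd e u).
Local Notation q := (#|W|).

Lemma adj_max_pair_nbr_unique b x : e a b -> b != u -> x \in D -> e x b -> x = a.
Proof.
rewrite inE => ab bu ux xb; apply/eqP/negPn/negP => xa.
apply: (path3_degree_neq (y := b) (b := a) ux xb) => //.
- by rewrite e_sym.
- by rewrite eq_sym.
- exact: (adj_neq e_irr ua).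
- by rewrite du da.
Qed.

Lemma adj_max_pair_nbr_degree b : b \in nbhd e a :&: D ->
  2 <= d b <= 2 + (q - #|nbhd e a :&: W|).
Proof.
rewrite !inE => /andP[ab ub]; have bD : b \in D by rewrite inE.
have bu := nbhd_neq e_irr bD.
have -> : d b = (1 + #|nbhd e b :&: W|).+1.
  rewrite (degree_nbhd_split e_sym e_irr bD); congr (_ + _).+1.
  apply/eqP/cards1P; exists a; apply/setP => x; rewrite !inE.
  apply/andP/eqP => [[bx ux]|->]; last by rewrite e_sym ab ua.
  by apply: (adj_max_pair_nbr_unique ab bu); rewrite ?inE // e_sym.
have : nbhd e b :&: W \subset W :\: nbhd e a :&: W.
  apply/subsetP => x; rewrite !inE => /andP[bx /andP[xu uNx]].
  rewrite xu uNx !andbT; apply: contraTN ab => ax.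
  by rewrite -(adj_max_pair_nbr_unique ax xu bD bx) e_irr.
move/subset_leq_card; rewrite cardsD (setIidPr (subsetIr _ _)).
by rewrite !add1n ltnS.
Qed.

Lemma adj_max_pair_maxdeg_le : Δ <= n.
Proof.
have aD : a \in D by rewrite inE.
have := @card_le_injective_range _ (nbhd e a :&: D) d _ _
  (common_nbhd_degree_injective ua) adj_max_pair_nbr_degree.
have : Δ = (#|nbhd e a :&: D| + #|nbhd e a :&: W|).+1.
  by rewrite -da; apply: degree_nbhd_split.
have : #|nbhd e a :&: W| <= q by rewrite subset_leq_card ?subsetIr.
have : Δ.+1 + q = 2 * n := maxdeg_split du.
lia.
Qed.

End AdjacentMaxPair.

Lemma maxdeg_clique_card_le3 :
  {in [set x | d x == Δ] &, forall x y, x != y -> e x y} -> #|[set x | d x == Δ]| <= 3.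
Proof.
set M := [set x | d x == Δ] => clique; rewrite leqNgt; apply/negP => M_gt3.
have pick s : size s <= 3 -> exists2 x, x \in M & x \notin s.
  by move=> s_le3; apply: exists_notin; apply: leq_ltn_trans M_gt3.
have [p1 p1M _] := pick [::] isT.
have [p2 p2M] := pick [:: p1] isT.
have [p3 p3M] := pick [:: p1; p2] isT.
have [p4 p4M] := pick [:: p1; p2; p3] isT.
rewrite !inE !negb_or => /and3P[p41 p42 p43] /andP[p31 p32] p21.
apply: (path3_degree_neq (a := p1) (x := p2) (y := p3) (b := p4)).
all: rewrite ?clique // 1?eq_sym //.
by move: p1M p4M; rewrite !inE => /eqP-> /eqP->.
Qed.

Section UniqueMax.
Variable u : T.
Hypotheses (du : d u = Δ) (max_uniq : forall x, x != u -> d x < Δ).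
Local Notation D := (nbhd e u).
Local Notation W := (non_nbhd e u).
Local Notation q := (#|W|).

Lemma unique_max_maxdeg_gt : n < Δ.
Proof.
have M_le1 : #|[set x | d x == Δ]| <= 1.
  rewrite -(cards1 u) subset_leq_card //; apply/subsetP => x; rewrite !inE.
  by apply: contraTT => xu; rewrite neq_ltn max_uniq.
have sum_le := sum_degree_le_maxdeg e; rewrite card_T in sum_le.
rewrite ltn_neqAle maxdeg_ge andbT; apply/eqP => nΔ.
by rewrite -nΔ in sum_le M_le1; nia.
Qed.

Lemma unique_max_pred_non_nbhd_gt0 a0 : a0 \in D -> d a0 = Δ.-1 -> 0 < q.
Proof.
move=> a0D da0; rewrite lt0n; apply/negP => /eqP q0.
have split_u := maxdeg_split du; have Δ_gt := unique_max_maxdeg_gt.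
have ua0 : e u a0 by rewrite -inE.
set B := nbhd e a0 :&: D.
have cardB : #|B| = Δ - 2.
  have : d a0 = (#|B| + #|nbhd e a0 :&: W|).+1 := degree_nbhd_split e_sym e_irr a0D.
  have : #|nbhd e a0 :&: W| <= q by rewrite subset_leq_card ?subsetIr.
  lia.
have range b : b \in B -> 2 <= d b <= Δ - 2.
  rewrite !inE => /andP[a0b ub]; have bD : b \in D by rewrite inE.
  have [x] : exists2 x, x \in B & x \notin [:: b] by apply: exists_notin => /=; lia.
  rewrite !inE => /andP[a0x ux] xb; have xD : x \in D by rewrite inE.
  have x_a0 : e x a0 by rewrite e_sym.
  have := common_nbr_degree_neq bD xD x_a0 (nbhd_neq e_irr a0D) (adj_neq e_irr a0b) xb.
  rewrite da0 => /(leq_sub2_neq_pred (max_uniq (nbhd_neq e_irr bD))) ->.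
  rewrite andbT (degree_nbhd_split e_sym e_irr bD) !ltnS addn_gt0; apply/orP; left.
  by apply/card_gt0P; exists a0; rewrite !inE e_sym a0b.
have := @card_le_injective_range _ B d _ _ (common_nbhd_degree_injective ua0) range.
by rewrite cardB; lia.
Qed.

Lemma unique_max_non_nbhd_le a0 x : a0 \in D -> d a0 = Δ.-1 -> x \in W -> d x <= Δ - 2.
Proof.
move=> a0D da0 xW; have := xW; rewrite inE => /andP[xu uNx].
apply: (leq_sub2_neq_pred (max_uniq xu)).
case: (leqP #|nbhd e x :&: D| 1) => [N_le1 | N_gt1].
  have := card_nbhd_non_nbhd_lt e_irr xW; have := degree_non_nbhd_split e_sym xW.
  by have := maxdeg_split du; have := unique_max_maxdeg_gt; lia.
have [b] : exists2 b, b \in nbhd e x :&: D & b \notin [:: a0] by apply: exists_notin.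
rewrite !inE => /andP[xb ub] ba0; have bD : b \in D by rewrite inE.
have xa0 : x != a0 by apply: contraNneq uNx => ->; rewrite -inE.
by rewrite -da0 eq_sym (common_nbr_degree_neq a0D bD) // e_sym.
Qed.

(* Here the degree count of [unique_max_absurd] misses by one. *)
Lemma unique_max_n3_absurd a0 : a0 \in D -> d a0 = Δ.-1 -> n = 3 -> q = 1 -> False.
Proof.
move=> a0D da0 n3 q1; have Δ4 : Δ = 4 by have := maxdeg_split du; lia.
have [w wW] : exists w, w \in W by apply/card_gt0P; rewrite q1.
have W1 : W = [set w] by apply/eqP; rewrite eq_sym eqEcard sub1set wW cards1 q1.
have sum_u : \sum_x d x = Δ + \sum_(a in D) d a + d w.
  by rewrite (sum_vertices_split e_irr d u) du W1 big_set1.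
have dw_le := unique_max_non_nbhd_le a0D da0 wW.
have d_le a : a \in D -> d a <= 3 by move/(nbhd_neq e_irr)/max_uniq; lia.
have := degree_non_nbhd_split e_sym wW; have := card_nbhd_non_nbhd_lt e_irr wW.
case: (leqP #|nbhd e w :&: D| 1) => [N_le1 | N_gt1] Nw_lt dw.
  have := sum_degree_nbhd_le d_le; rewrite du; lia.
have dw2 : d w = 2 by lia.
have no2 c : c \in D -> d c != 2.
  move=> cD; have [b] : exists2 b, b \in nbhd e w :&: D & b \notin [:: c].
    by apply: exists_notin.
  rewrite !inE => /andP[wb ub] bc; have bD : b \in D by rewrite inE.
  have := wW; rewrite inE => /andP[wu uNw].
  have wc : w != c by apply: contraNneq uNw => ->; move: cD; rewrite inE.
  by rewrite -dw2 (common_nbr_degree_neq cD bD) // e_sym.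
have : \sum_(a in D) d a <= \sum_(a in D) (1 + 2 * (d a == q + 2)).
  apply: leq_sum => a aD; have := d_le a aD; have := no2 a aD.
  by rewrite q1; case: eqP; lia.
rewrite big_split /= sum1_card -big_distrr /= sum_nat_count card_nbhd du.
by have := card_mid_degree_nbhd_le2 u; have := sum_degree_ge; rewrite n3; lia.
Qed.

Lemma unique_max_sum_ge :
  2 * (n * n) <= Δ + \sum_(a in D) d a + \sum_(x in W) d x + 2.
Proof. by rewrite -du -sum_vertices_split. Qed.

Lemma unique_max_pred_absurd a0 : a0 \in D -> d a0 = Δ.-1 -> False.
Proof.
move=> a0D da0; have q_gt0 := unique_max_pred_non_nbhd_gt0 a0D da0.
case: (ltnP 3 n) => [n_gt3 | n_le3]; last first.
  apply: (unique_max_n3_absurd a0D da0); first lia.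
  by have := maxdeg_split du; have := unique_max_maxdeg_gt; lia.
have d_le a : a \in D -> d a <= Δ - 1.
  by move/(nbhd_neq e_irr)/max_uniq; lia.
have SW : \sum_(x in W) d x <= q * (Δ - 2).
  by rewrite -sum_nat_const; apply: leq_sum => x; apply: unique_max_non_nbhd_le a0D da0.
have SD := sum_degree_nbhd_le d_le; rewrite du in SD.
exact: unique_max_arith2 n_gt3 q_gt0 (maxdeg_split du) unique_max_maxdeg_gt SD SW
  unique_max_sum_ge.
Qed.

Lemma unique_max_absurd : False.
Proof.
case: (boolP [exists a in D, d a == Δ.-1]) => [/exists_inP[a0 a0D /eqP]|].
  exact: unique_max_pred_absurd.
move/exists_inPn => no_pred; have d_le a : a \in D -> d a <= Δ - 2.
  by move=> aD; apply: leq_sub2_neq_pred (max_uniq (nbhd_neq e_irr aD)) (no_pred a aD).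
have SW : \sum_(x in W) d x <= q * (Δ - 1).
  rewrite -sum_nat_const; apply: leq_sum => x; rewrite inE => /andP[xu _].
  by have := max_uniq xu; lia.
have SD := sum_degree_nbhd_le d_le; rewrite du in SD.
exact: unique_max_arith1 n_ge3 (maxdeg_split du) unique_max_maxdeg_gt SD SW unique_max_sum_ge.
Qed.

End UniqueMax.

Lemma maxdeg_clique_absurd :
  {in [set x | d x == Δ] &, forall x y, x != y -> e x y} -> False.
Proof.
move=> clique; have [u du] : exists u, d u = Δ by apply: maxdeg_attained; lia.
case: (boolP [exists a, (d a == Δ) && (a != u)]) => [|only_u].
  case/existsP => a /andP[/eqP da au].
  have ua : e u a by apply: clique; rewrite ?inE ?du ?da // eq_sym.
  have := adj_max_pair_maxdeg_le du da ua; have := maxdeg_ge.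
  have := maxdeg_clique_card_le3 clique; have := sum_degree_le_maxdeg e.
  by rewrite card_T; nia.
apply: (unique_max_absurd du) => x xu; rewrite ltn_neqAle leq_degree_maxdeg andbT.
by move/existsPn/(_ x): only_u; rewrite xu andbT.
Qed.

Lemma extremal_graph_iso : graph_iso e (Kbip n.-1 n.+1).
Proof.
case: (boolP [exists u, exists w, [&& d u == Δ, d w == Δ, w != u & ~~ e u w]]).
  case/existsP => u /existsP[w /and4P[/eqP du /eqP dw wu uNw]].
  exact: (indep_max_iso du (nonadj_max_nbhd_indep du dw wu uNw)).
move/existsPn => no_pair; exfalso; apply: maxdeg_clique_absurd => x y.
rewrite !inE => dx dy yx; move/existsPn/(_ y): (no_pair x).
by rewrite dx dy eq_sym yx /= negbK.
Qed.

End Extremal.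
End NoEqualDegreePath3.

Theorem theorem1p5 (n : nat) (T : finType) (e : rel T) :
  3 <= n ->
  simple_graph e ->
  #|T| = 2 * n ->
  n ^ 2 - 1 <= num_edges e ->
  no_equal_degree_path3 e ->
  graph_iso e (Kbip n.-1 n.+1).
Proof.
move=> n_ge3 [e_sym e_irr] card_T many_edges no_path3.
apply: (extremal_graph_iso e_sym e_irr no_path3 n_ge3 card_T).
by rewrite sum_degree //; move: many_edges; rewrite -mulnn; lia.
Qed.
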